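(* For every problem $f$ we have $\overline{f'}\le_{sW}(\overline f)'\equiv_{sW}\overline{(\overline f)'}$. In particular, if $f$ is strongly complete (i.e. $f\equiv_{sW}\overline f$), then its jump $f'$ is strongly complete.
   Context: Represented space $(X,\delta_X)$: set with surjective partial $\delta_X:\subseteq\mathbb{N}^\mathbb{N}\to X$. A problem $f:\subseteq X\rightrightarrows Y$ is a partial multi-valued map with nonempty values on its domain; $F\vdash f$ means $\delta_YF(p)\in f(\delta_X(p))$ whenever $\delta_X(p)\in\mathrm{dom}(f)$. $f\le_{sW}g$ iff there are computable partial $H,K:\subseteq\mathbb{N}^\mathbb{N}\to\mathbb{N}^\mathbb{N}$ with $HGK\vdash f$ for all $G\vdash g$; $\equiv_{sW}$ is the induced equivalence. $\lim:\subseteq\mathbb{N}^\mathbb{N}\to\mathbb{N}^\mathbb{N}$ maps $\langle p_0,p_1,\dots\rangle$ (standard infinite tupling) to $\lim_n p_n$ when it exists. The jump of $f:\subseteq X\rightrightarrows Y$ is $f':\subseteq X'\rightrightarrows Y$, the same multi-valued map with input space $X'=(X,\delta_X\circ\lim)$. For $p\in\mathbb{N}^\mathbb{N}$, $p-1$ is the concatenation of $p(0)-1,p(1)-1,\dots$ with $0-1$ the empty word. The completion of $(X,\delta_X)$ is $\overline X=X\cup\{\bot\}$ with $\delta_{\overline X}(p)=\delta_X(p-1)$ if $p-1$ is an infinite sequence in $\mathrm{dom}(\delta_X)$, $\delta_{\overline X}(p)=\bot$ otherwise; the completion of $f$ is $\overline f:\overline X\rightrightarrows\overline Y$, $\overline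 f(x)=f(x)$ on $\mathrm{dom}(f)$ and $\overline Y$ otherwise. *)

From Stdlib Require Import Arith Lia List Cantor FunctionalExtensionality.
Import ListNotations.

Definition baire := nat -> nat.

(** * Oracle partial recursive functions (Kleene's mu-recursion relative to
    an oracle p : baire).  [eval p e v y] : machine [e] with oracle [p] on
    argument list [v] halts with output [y]. *)
Inductive rf : Type :=
| rZero : rf
| rSucc : rf
| rProj : nat -> rf
| rOracle : rf
| rComp : rf -> rfs -> rf
| rPrec : rf -> rf -> rf
| rMu : rf -> rf
with rfs : Type :=
| rnil : rfs
| rcons : rf -> rfs -> rfs.

Inductive eval (p : baire) : rf -> list nat -> nat -> Prop :=
| eZero v : eval p rZero v 0
| eSucc v : eval p rSucc v (S (hd 0 v))
| eProj i v : eval p (rProj i) v (nth i v 0)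
| eOracle v : eval p rOracle v (p (hd 0 v))
| eComp f gs v ws y :
    evals p gs v ws -> eval p f ws y -> eval p (rComp f gs) v y
| ePrec0 f g v y : eval p f v y -> eval p (rPrec f g) (0 :: v) y
| ePrecS f g n v r y :
    eval p (rPrec f g) (n :: v) r -> eval p g (n :: r :: v) y ->
    eval p (rPrec f g) (S n :: v) y
| eMu f v n :
    eval p f (n :: v) 0 ->
    (forall m, m < n -> exists k, eval p f (m :: v) (S k)) ->
    eval p (rMu f) v n
with evals (p : baire) : rfs -> list nat -> list nat -> Prop :=
| esNil v : evals p rnil v []
| esCons g gs v y ys :
    eval p g v y -> evals p gs v ys -> evals p (rcons g gs) v (y :: ys).

(** The computable partial map [F : baire -> baire] computed by machine [e]:
    [runs e p q] iff on input (oracle) [p] the machine outputs every [q n]. *)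
Definition runs (e : rf) (p q : baire) : Prop :=
  forall n, eval p e [n] (q n).

(** * Represented spaces: a surjective partial map delta :⊆ baire -> X,
    given as a functional, surjective relation. *)
Record repr_space : Type := {
  carrier :> Type;
  delta : baire -> carrier -> Prop;
  delta_fun : forall p x y, delta p x -> delta p y -> x = y;
  delta_surj : forall x : carrier, exists p, delta p x
}.

(** Problems f :⊆ X ⇉ Y as relations; dom f = {x | exists y, f x y}. *)
Definition problem (X Y : repr_space) : Type := carrier X -> carrier Y -> Prop.

Definition realizes {X Y : repr_space} (F : baire -> baire -> Prop)
  (f : problem X Y) : Prop :=
  forall p x, delta X p x -> (exists y, f x y) ->
    exists q, F p q /\ exists y, delta Y q y /\ f x y.

Definition sW {X Y Z W : repr_space} (f : problem X Y) (g : problem Z W) : Prop :=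
  exists eH eK : rf,
    forall G : baire -> option baire,
      realizes (fun p q => G p = Some q) g ->
      realizes (fun p q => exists q1 q2,
                   runs eK p q1 /\ G q1 = Some q2 /\ runs eH q2 q) f.

Definition sW_equiv {X Y Z W : repr_space} (f : problem X Y) (g : problem Z W) : Prop :=
  sW f g /\ sW g f.

(** Standard infinite tupling via Cantor pairing:
    <p_0,p_1,...>(to_nat (i, j)) = p_i(j).  [lim_rel r q] : the sequence
    coded by r converges to q in Baire space. *)
Definition lim_rel (r q : baire) : Prop :=
  forall k, exists N, forall n, N <= n -> r (to_nat (n, k)) = q k.

Lemma lim_rel_unique r q q' : lim_rel r q -> lim_rel r q' -> q = q'.
Proof.
  intros H1 H2. apply functional_extensionality. intros k.
  destruct (H1 k) as [N1 HN1]. destruct (H2 k) as [N2 HN2].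
  rewrite <- (HN1 (N1 + N2)) by lia. apply HN2. lia.
Qed.

Definition jump_delta (X : repr_space) (r : baire) (x : carrier X) : Prop :=
  exists q, lim_rel r q /\ delta X q x.

Lemma jump_delta_fun X p x y : jump_delta X p x -> jump_delta X p y -> x = y.
Proof.
  intros [q [Hq Hx]] [q' [Hq' Hy]].
  rewrite (lim_rel_unique _ _ _ Hq Hq') in Hx. exact (delta_fun X _ _ _ Hx Hy).
Qed.

Lemma jump_delta_surj X (x : carrier X) : exists p, jump_delta X p x.
Proof.
  destruct (delta_surj X x) as [q Hq].
  exists (fun m => q (snd (of_nat m))). exists q. split; [|exact Hq].
  intros k. exists 0. intros n _. rewrite cancel_of_to. reflexivity.
Qed.

Definition jump_space (X : repr_space) : repr_space :=
  {| carrier := carrier X; delta := jump_delta X;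
     delta_fun := jump_delta_fun X; delta_surj := jump_delta_surj X |}.

Definition jump {X Y : repr_space} (f : problem X Y) : problem (jump_space X) Y := f.

Fixpoint nz_count (p : baire) (i : nat) : nat :=
  match i with
  | 0 => 0
  | S i' => nz_count p i' + (if Nat.eqb (p i') 0 then 0 else 1)
  end.

(** [minus1 p q] : p - 1 (concatenation of p(i)-1, with 0-1 the empty word)
    is the infinite sequence q. *)
Definition minus1 (p q : baire) : Prop :=
  (forall k, exists i, nz_count p i = k /\ p i <> 0) /\
  (forall i, p i <> 0 -> q (nz_count p i) = p i - 1).

Lemma minus1_unique p q q' : minus1 p q -> minus1 p q' -> q = q'.
Proof.
  intros [Hi H1] [_ H2]. apply functional_extensionality. intros k.
  destruct (Hi k) as [i [<- Hp]]. rewrite H1, H2; auto.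
Qed.

Definition compl_delta (X : repr_space) (p : baire) (x : option (carrier X)) : Prop :=
  match x with
  | Some x => exists q, minus1 p q /\ delta X q x
  | None => ~ (exists q x, minus1 p q /\ delta X q x)
  end.

Lemma compl_delta_fun X p x y : compl_delta X p x -> compl_delta X p y -> x = y.
Proof.
  destruct x as [x|], y as [y|]; simpl; intros Hx Hy; auto.
  - destruct Hx as [q [Hq Hx]], Hy as [q' [Hq' Hy]].
    rewrite (minus1_unique _ _ _ Hq Hq') in Hx. f_equal. exact (delta_fun X _ _ _ Hx Hy).
  - destruct Hx as [q [Hq Hx]]. exfalso. apply Hy. eauto.
  - destruct Hy as [q [Hq Hy]]. exfalso. apply Hx. eauto.
Qed.

Lemma nz_count_succ (q : baire) i : nz_count (fun j => S (q j)) i = i.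
Proof. induction i; simpl; auto. rewrite IHi. lia. Qed.

Lemma compl_delta_surj X (x : option (carrier X)) : exists p, compl_delta X p x.
Proof.
  destruct x as [x|].
  - destruct (delta_surj X x) as [q Hq]. exists (fun j => S (q j)). simpl.
    exists q. split; [|exact Hq]. split.
    + intros k. exists k. rewrite nz_count_succ. split; auto.
    + intros i _. rewrite nz_count_succ. lia.
  - exists (fun _ => 0). simpl. intros [q [x [[Hi _] _]]].
    destruct (Hi 0) as [i [_ H]]. apply H; reflexivity.
Qed.

(** completion: overline X = X ∪ {⊥} (⊥ = None) *)
Definition completion_space (X : repr_space) : repr_space :=
  {| carrier := option (carrier X); delta := compl_delta X;
     delta_fun := compl_delta_fun X; delta_surj := compl_delta_surj X |}.

(** overline f (x) = f(x) for x in dom f, and overline Y otherwise *)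
Definition completion {X Y : repr_space} (f : problem X Y) :
  problem (completion_space X) (completion_space Y) :=
  fun xo yo =>
    forall x, xo = Some x -> (exists y, f x y) -> exists y, yo = Some y /\ f x y.

From Stdlib Require Import Arith Lia List Cantor FunctionalExtensionality Bool Classical ClassicalEpsilon.
Import ListNotations.

(* The reduction of the completed jump to the jump of the completion carries the
   content. A name [p] of an element of the completion of [jump_space X] has [p - 1 = r]
   with [r] converging to a name [q]. Reading [p] stage by stage, we record for each
   coordinate [j] the latest value written to it and the last stage [c] at which some
   coordinate [<= j] changed; stage [n] of a new sequence puts that latest value plus one
   at position [<c, j>] and [0] elsewhere. This sequence converges for every [p],
   and its limit [s] has exactly one nonzero entry per coordinate, at positions increasing
   in [j], so [s - 1 = q]: it names the same point in the completion.
   The rest is formal: [f <=sW completion f], [completion (completion f) <=sW completion f],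
   reductions from a total problem lift to jumps, and [<=sW] is transitive. *)

(** * Programming oracle machines *)

Fixpoint rfs_of (gs : list rf) : rfs :=
  match gs with [] => rnil | g :: gs => rcons g (rfs_of gs) end.

Definition comp f gs := rComp f (rfs_of gs).

Lemma eval_eq p e v y y' : eval p e v y -> y = y' -> eval p e v y'.
Proof. intros H ->; exact H. Qed.

Lemma evals_of_Forall2 p gs v ys :
  Forall2 (fun g z => eval p g v z) gs ys -> evals p (rfs_of gs) v ys.
Proof. induction 1; simpl; constructor; auto. Qed.

Lemma eval_comp p f gs v ys y :
  Forall2 (fun g z => eval p g v z) gs ys -> eval p f ys y -> eval p (comp f gs) v y.
Proof. intros H Hf. apply eComp with ys; auto. now apply evals_of_Forall2. Qed.

Create HintDb eval_db.
Ltac ev :=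
  lazymatch goal with
  | |- eval _ (comp _ _) _ _ => eapply eval_comp; [ evl | ev ]
  | |- eval _ (rProj _) _ _ => eapply eval_eq; [apply eProj | ]
  | |- eval _ rOracle _ _ => eapply eval_eq; [apply eOracle|]
  | |- eval _ rSucc _ _ => eapply eval_eq; [apply eSucc|]
  | |- eval _ rZero _ _ => eapply eval_eq; [apply eZero|]
  | |- eval _ _ _ _ => eapply eval_eq; [solve [eauto with eval_db] |]
  end
with evl := first [ apply Forall2_nil | eapply Forall2_cons; [ev | evl] ].
Ltac evs := ev; simpl; try reflexivity.

Fixpoint prec_iter (F : list nat -> nat) (G : nat -> nat -> list nat -> nat) n v :=
  match n with 0 => F v | S n => G n (prec_iter F G n v) v end.

Lemma eval_prec p f g F G (Hf : forall v, eval p f v (F v))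
  (Hg : forall n r v, eval p g (n :: r :: v) (G n r v)) n v :
  eval p (rPrec f g) (n :: v) (prec_iter F G n v).
Proof. induction n; simpl. - now apply ePrec0. - eapply ePrecS; eauto. Qed.

Ltac ev_prec F G :=
  eapply eval_comp; [evl; simpl; reflexivity|];
  eapply eval_eq; [apply (eval_prec _ _ _ F G); intros; evs|].

Definition mAdd := comp (rPrec (rProj 0) (comp rSucc [rProj 1])) [rProj 0; rProj 1].
Lemma eval_add p a b v : eval p mAdd (a :: b :: v) (a + b).
Proof.
  unfold mAdd. ev_prec (fun v => nth 0 v 0) (fun (n r : nat) (v : list nat) => S r).
  simpl. induction a; simpl; auto.
Qed.
#[local] Hint Resolve eval_add : eval_db.
Definition mPred := comp (rPrec rZero (rProj 0)) [rProj 0].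
Lemma eval_pred p a v : eval p mPred (a :: v) (a - 1).
Proof.
  unfold mPred. ev_prec (fun _ : list nat => 0) (fun (n _ : nat) (_ : list nat) => n).
  destruct a; simpl; lia.
Qed.
#[local] Hint Resolve eval_pred : eval_db.

Definition mSub := comp (rPrec (rProj 0) (comp mPred [rProj 1])) [rProj 1; rProj 0].
Lemma eval_sub p a b v : eval p mSub (a :: b :: v) (a - b).
Proof.
  unfold mSub. ev_prec (fun v => nth 0 v 0) (fun (_ r : nat) (_ : list nat) => r - 1).
  simpl. induction b; simpl; lia.
Qed.
#[local] Hint Resolve eval_sub : eval_db.

Definition mIsZero := comp (rPrec (comp rSucc [rZero]) rZero) [rProj 0].
Lemma eval_isZero p a v : eval p mIsZero (a :: v) (if a =? 0 then 1 else 0).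
Proof.
  unfold mIsZero. ev_prec (fun _ : list nat => 1) (fun (_ _ : nat) (_ : list nat) => 0).
  now destruct a.
Qed.
#[local] Hint Resolve eval_isZero : eval_db.

Definition mSign := comp (rPrec rZero (comp rSucc [rZero])) [rProj 0].
Lemma eval_sign p a v : eval p mSign (a :: v) (if a =? 0 then 0 else 1).
Proof.
  unfold mSign. ev_prec (fun _ : list nat => 0) (fun (_ _ : nat) (_ : list nat) => 1).
  now destruct a.
Qed.
#[local] Hint Resolve eval_sign : eval_db.

Definition mDist := comp mAdd [comp mSub [rProj 0; rProj 1]; comp mSub [rProj 1; rProj 0]].
Lemma eval_dist p a b v : eval p mDist (a :: b :: v) ((a - b) + (b - a)).
Proof. unfold mDist. evs. Qed.
#[local] Hint Resolve eval_dist : eval_db.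

Definition mCond := comp (rPrec (rProj 0) (rProj 3)) [rProj 0; rProj 1; rProj 2].
Lemma eval_cond p c x y v : eval p mCond (c :: x :: y :: v) (if c =? 0 then x else y).
Proof.
  unfold mCond. ev_prec (fun v => nth 0 v 0) (fun (_ _ : nat) (v : list nat) => nth 1 v 0).
  now destruct c.
Qed.
#[local] Hint Resolve eval_cond : eval_db.

(** * Cantor pairing *)

Definition tri d := nat_rec (fun _ => nat) 0 (fun i m => S i + m) d.

Lemma to_nat_tri x y : to_nat (x, y) = y + tri (y + x).
Proof. reflexivity. Qed.

Lemma tri_S d : tri (S d) = S d + tri d.
Proof. reflexivity. Qed.

Lemma tri_mono a b : a <= b -> tri a <= tri b.
Proof. induction 1; auto. rewrite tri_S. lia. Qed.

Lemma to_nat_mono_l m M j : m <= M -> to_nat (m, j) <= to_nat (M, j).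
Proof. intros. rewrite !to_nat_tri. pose proof (tri_mono (j + m) (j + M)). lia. Qed.

Lemma to_nat_lt_S_r c c' j : c <= c' -> to_nat (c, j) < to_nat (c', S j).
Proof. intros. rewrite !to_nat_tri. pose proof (tri_mono (j + c) (S j + c')). lia. Qed.

Definition mTri := comp (rPrec rZero (comp rSucc [comp mAdd [rProj 0; rProj 1]])) [rProj 0].
Lemma eval_tri p d v : eval p mTri (d :: v) (tri d).
Proof.
  unfold mTri. ev_prec (fun _ : list nat => 0) (fun (n r : nat) (_ : list nat) => S (n + r)).
  induction d; simpl; auto.
Qed.
#[local] Hint Resolve eval_tri : eval_db.

(* The diagonal of the Cantor enumeration containing [m]. *)
Fixpoint diag m :=
  match m with 0 => 0 | S n => diag n + (if tri (S (diag n)) <=? S n then 1 else 0) end.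

Lemma diag_spec m : tri (diag m) <= m < tri (S (diag m)).
Proof.
  induction m; cbn [diag]; [simpl; lia|].
  destruct (Nat.leb_spec (tri (S (diag m))) (S m)).
  - rewrite Nat.add_1_r, (tri_S (S (diag m))). lia.
  - rewrite Nat.add_0_r. lia.
Qed.

Lemma of_nat_diag m : of_nat m = (diag m - (m - tri (diag m)), m - tri (diag m)).
Proof.
  pose proof (diag_spec m) as [H1 H2]. rewrite tri_S in H2.
  assert (E : to_nat (diag m - (m - tri (diag m)), m - tri (diag m)) = m).
  { rewrite to_nat_tri.
    replace (m - tri (diag m) + (diag m - (m - tri (diag m)))) with (diag m) by lia. lia. }
  rewrite <- E at 1. apply cancel_of_to.
Qed.

Ltac decide_all :=
  repeat (match goal with
          | |- context [?a =? ?b] => destruct (Nat.eqb_spec a b)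
          | |- context [?a <=? ?b] => destruct (Nat.leb_spec a b)
          | H : context [?a =? ?b] |- _ => destruct (Nat.eqb_spec a b)
          | H : context [?a <=? ?b] |- _ => destruct (Nat.leb_spec a b)
          end; simpl in *); try lia.

Definition mDiag :=
  comp (rPrec rZero (comp mAdd [rProj 1; comp mIsZero [comp mSub [comp mTri [comp rSucc [rProj 1]];
                                                             comp rSucc [rProj 0]]]]))
       [rProj 0].
Lemma eval_diag p m v : eval p mDiag (m :: v) (diag m).
Proof.
  unfold mDiag. ev_prec (fun _ : list nat => 0)
    (fun (n r : nat) (_ : list nat) => r + (if tri (S r) - S n =? 0 then 1 else 0)).
  induction m; [reflexivity|]. cbn [prec_iter diag]. rewrite IHm. decide_all.
Qed.
#[local] Hint Resolve eval_diag : eval_db.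

Definition mSnd := comp mSub [rProj 0; comp mTri [comp mDiag [rProj 0]]].
Lemma eval_snd p m v : eval p mSnd (m :: v) (snd (of_nat m)).
Proof. unfold mSnd. evs. now rewrite of_nat_diag. Qed.
#[local] Hint Resolve eval_snd : eval_db.

Definition mFst := comp mSub [comp mDiag [rProj 0]; comp mSnd [rProj 0]].
Lemma eval_fst p m v : eval p mFst (m :: v) (fst (of_nat m)).
Proof. unfold mFst. evs. now rewrite of_nat_diag. Qed.
#[local] Hint Resolve eval_fst : eval_db.

Definition mPair := comp mAdd [rProj 1; comp mTri [comp mAdd [rProj 1; rProj 0]]].
Lemma eval_pair p x y v : eval p mPair (x :: y :: v) (to_nat (x, y)).
Proof. unfold mPair. evs. Qed.
#[local] Hint Resolve eval_pair : eval_db.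

Definition mNzCount :=
  comp (rPrec rZero (comp mAdd [rProj 1; comp mSign [comp rOracle [rProj 0]]])) [rProj 0].
Lemma eval_nz_count p n v : eval p mNzCount (n :: v) (nz_count p n).
Proof.
  unfold mNzCount. ev_prec (fun _ : list nat => 0)
    (fun (n r : nat) (_ : list nat) => r + (if p n =? 0 then 0 else 1)).
  induction n; [reflexivity|]. cbn [prec_iter nz_count]. now rewrite IHn.
Qed.
#[local] Hint Resolve eval_nz_count : eval_db.

(** * Determinism, composition and continuity *)

Fixpoint eval_det p e v y (H : eval p e v y) {struct H} : forall y', eval p e v y' -> y = y'
with evals_det p gs v ys (H : evals p gs v ys) {struct H} : forall ys', evals p gs v ys' -> ys = ys'.
Proof.
- destruct H as [v|v|i v|v|f gs v ws y Hs Hf|f g v y Hf|f g n v r y Hr Hg|f v n Hf Hlt];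
    intros y' H'; inversion H'; subst; auto.
  + match goal with H2 : evals p gs v ?w, H3 : eval p f ?w y' |- _ =>
      pose proof (evals_det _ _ _ _ Hs _ H2); subst; exact (eval_det _ _ _ _ Hf _ H3) end.
  + match goal with H3 : eval p f v y' |- _ => exact (eval_det _ _ _ _ Hf _ H3) end.
  + match goal with H2 : eval p (rPrec f g) (n :: v) ?w, H3 : eval p g (n :: ?w :: v) y' |- _ =>
      pose proof (eval_det _ _ _ _ Hr _ H2); subst; exact (eval_det _ _ _ _ Hg _ H3) end.
  + match goal with H2 : eval p f (y' :: v) 0, H3 : forall m, m < y' -> _ |- _ =>
    destruct (Nat.lt_trichotomy n y') as [Hl|[Hl|Hl]]; auto;
    [ destruct (H3 n Hl) as [k Hk]; pose proof (eval_det _ _ _ _ Hf _ Hk); discriminate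
    | destruct (Hlt y' Hl) as [k Hk]; pose proof (eval_det _ _ _ _ Hk _ H2); discriminate ] end.
- destruct H as [v|g gs v y ys Hg Hgs]; intros ys' H'; inversion H'; subst; auto.
  match goal with H2 : eval p g v ?a, H3 : evals p gs v ?b |- _ =>
  pose proof (eval_det _ _ _ _ Hg _ H2); pose proof (evals_det _ _ _ _ Hgs _ H3); subst; auto end.
Qed.

Lemma runs_fun e p a b : runs e p a -> runs e p b -> a = b.
Proof. intros Ha Hb. apply functional_extensionality. intros n. eapply eval_det; eauto. Qed.

Lemma runs_oracle q : runs rOracle q q.
Proof. intros n. apply eOracle. Qed.

Fixpoint subst_oracle (o : rf) (e : rf) : rf :=
  match e with
  | rOracle => comp o [rProj 0]
  | rComp f gs => rComp (subst_oracle o f) (substs_oracle o gs)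
  | rPrec f g => rPrec (subst_oracle o f) (subst_oracle o g)
  | rMu f => rMu (subst_oracle o f)
  | e => e
  end
with substs_oracle o gs :=
  match gs with rnil => rnil | rcons g gs => rcons (subst_oracle o g) (substs_oracle o gs) end.

Section SubstOracle.
Variables (o : rf) (p q : baire).
Hypothesis Ho : runs o p q.

Fixpoint eval_subst_oracle e v y (H : eval q e v y) {struct H} : eval p (subst_oracle o e) v y
with evals_subst_oracle gs v ys (H : evals q gs v ys) {struct H} :
  evals p (substs_oracle o gs) v ys.
Proof.
- destruct H as [v|v|i v|v|f gs v ws y Hs Hf|f g v y Hf|f g n v r y Hr Hg|f v n Hf Hlt]; simpl.
  + constructor.
  + constructor.
  + constructor.
  + eapply eval_comp; [eapply Forall2_cons; [apply eProj| apply Forall2_nil] | ].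
    eapply eval_eq; [apply Ho|]. now destruct v.
  + eapply eComp; [exact (evals_subst_oracle _ _ _ Hs) | exact (eval_subst_oracle _ _ _ Hf)].
  + apply ePrec0; exact (eval_subst_oracle _ _ _ Hf).
  + eapply ePrecS; [exact (eval_subst_oracle _ _ _ Hr) | exact (eval_subst_oracle _ _ _ Hg)].
  + constructor; [exact (eval_subst_oracle _ _ _ Hf)|].
    intros m Hm. destruct (Hlt m Hm) as [k Hk]. exists k. exact (eval_subst_oracle _ _ _ Hk).
- destruct H as [v|g gs v y ys Hg Hgs]; simpl; constructor;
    [exact (eval_subst_oracle _ _ _ Hg) | exact (evals_subst_oracle _ _ _ Hgs)].
Qed.
End SubstOracle.

Lemma runs_subst_oracle o e p a b : runs o p a -> runs e a b -> runs (subst_oracle o e) p b.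
Proof. intros H1 H2 n. apply (eval_subst_oracle o p a H1). apply H2. Qed.

Definition agree N (p q : baire) := forall j, j < N -> p j = q j.

Lemma agree_le N N' p q : N <= N' -> agree N' p q -> agree N p q.
Proof. intros H A j Hj. apply A. lia. Qed.

Lemma agree_below_mu p f v k :
  (forall j, j < k -> exists z N, forall p', agree N p' p -> eval p' f (j :: v) (S z)) ->
  exists N, forall p', agree N p' p -> forall j, j < k -> exists z, eval p' f (j :: v) (S z).
Proof.
  intros Hlt. induction k as [|k IH].
  - exists 0. intros; lia.
  - destruct IH as [N2 H2]; [intros; apply Hlt; lia|].
    destruct (Hlt k (Nat.lt_succ_diag_r k)) as [z [N3 H3]]. exists (N2 + N3). intros p' A j Hj.
    destruct (Nat.eq_dec j k).
    + subst. exists z. apply H3. eapply agree_le; [|eauto]; lia.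
    + apply H2; [eapply agree_le; [|eauto]; lia | lia].
Qed.

Fixpoint eval_use q e v y (H : eval q e v y) {struct H} :
  exists N, forall p', agree N p' q -> eval p' e v y
with evals_use q gs v ys (H : evals q gs v ys) {struct H} :
  exists N, forall p', agree N p' q -> evals p' gs v ys.
Proof.
- destruct H as [v|v|i v|v|f gs v ws y Hs Hf|f g v y Hf|f g m v r0 y Hr Hg|f v k Hf Hlt].
  + exists 0; intros; constructor.
  + exists 0; intros; constructor.
  + exists 0; intros; constructor.
  + exists (S (hd 0 v)). intros p' A. eapply eval_eq. apply eOracle. apply A. lia.
  + destruct (evals_use _ _ _ _ Hs) as [N1 H1]. destruct (eval_use _ _ _ _ Hf) as [N2 H2].
    exists (N1 + N2). intros p' A. eapply eComp.
    * apply H1. eapply agree_le; [|eauto]; lia.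
    * apply H2. eapply agree_le; [|eauto]; lia.
  + destruct (eval_use _ _ _ _ Hf) as [N1 H1]. exists N1. intros p' A. apply ePrec0. auto.
  + destruct (eval_use _ _ _ _ Hr) as [N1 H1]. destruct (eval_use _ _ _ _ Hg) as [N2 H2].
    exists (N1 + N2). intros p' A. eapply ePrecS.
    * apply H1. eapply agree_le; [|eauto]; lia.
    * apply H2. eapply agree_le; [|eauto]; lia.
  + destruct (eval_use _ _ _ _ Hf) as [N1 H1].
    destruct (agree_below_mu q f v k (fun j Hj =>
      match Hlt j Hj with ex_intro _ z Hz => ex_intro _ z (eval_use _ _ _ _ Hz) end))
      as [N2 H2].
    exists (N1 + N2). intros p' A. apply eMu.
    * apply H1. eapply agree_le; [|eauto]; lia.
    * apply H2. eapply agree_le; [|eauto]; lia.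
- destruct H as [v|g gs v y ys Hg Hgs].
  + exists 0; intros; constructor.
  + destruct (eval_use _ _ _ _ Hg) as [N1 H1]. destruct (evals_use _ _ _ _ Hgs) as [N2 H2].
    exists (N1 + N2). intros p' A. constructor.
    * apply H1. eapply agree_le; [|eauto]; lia.
    * apply H2. eapply agree_le; [|eauto]; lia.
Qed.

(** * Running a machine on a column of the oracle *)

Fixpoint projs (i n : nat) : list rf :=
  match n with 0 => [] | S n => rProj i :: projs (S i) n end.

Lemma eval_projs p u : forall pre,
  Forall2 (fun g z => eval p g (pre ++ u) z) (projs (length pre) (length u)) u.
Proof.
  induction u as [|x u IH]; intros pre; simpl; constructor.
  - eapply eval_eq. apply eProj. apply nth_middle.
  - specialize (IH (pre ++ [x])). rewrite <- app_assoc, length_app in IH. simpl in IH.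
    now rewrite Nat.add_1_r in IH.
Qed.

Lemma eval_projs_swap p n m v :
  Forall2 (fun g z => eval p g (n :: m :: v) z)
    (rProj 1 :: rProj 0 :: projs 2 (length v)) (m :: n :: v).
Proof. constructor. apply eProj. constructor. apply eProj. apply (eval_projs p v [n; m]). Qed.

Lemma eval_projs_rot p n m r v :
  Forall2 (fun g z => eval p g (m :: r :: n :: v) z)
    (rProj 2 :: rProj 0 :: rProj 1 :: projs 3 (length v)) (n :: m :: r :: v).
Proof.
  constructor. apply eProj. constructor. apply eProj. constructor. apply eProj.
  apply (eval_projs p v [m; r; n]).
Qed.

Fixpoint rfs_length gs := match gs with rnil => 0 | rcons _ gs => S (rfs_length gs) end.

Lemma evals_length p gs v ws : evals p gs v ws -> length ws = rfs_length gs.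
Proof. induction 1; simpl; auto. Qed.

Lemma eval_comp_inv p f gs v ws y : eval p (rComp f gs) v y -> evals p gs v ws -> eval p f ws y.
Proof. intros H Hs. inversion H; subst. now rewrite (evals_det _ _ _ _ Hs _ H2). Qed.

(* [column a e] takes the column index [n] as an extra first argument and runs [e] with
   oracle [fun j => r (to_nat (n, j))]; [a] is the number of remaining arguments, which
   the translation of [rPrec] and [rMu] needs in order to permute them. *)
Fixpoint column (a : nat) (e : rf) {struct e} : rf :=
  match e with
  | rZero => rZero
  | rSucc => comp rSucc [rProj 1]
  | rProj i => rProj (S i)
  | rOracle => comp rOracle [comp mPair [rProj 0; rProj 1]]
  | rComp f gs => rComp (column (rfs_length gs) f) (rcons (rProj 0) (columns a gs))
  | rPrec f g =>
      match a with
      | 0 => rZero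
      | S a' =>
          rComp (rPrec (column a' f)
                       (comp (column (S (S a')) g) (rProj 2 :: rProj 0 :: rProj 1 :: projs 3 a')))
                (rfs_of (rProj 1 :: rProj 0 :: projs 2 a'))
      end
  | rMu f => rMu (comp (column (S a) f) (rProj 1 :: rProj 0 :: projs 2 a))
  end
with columns (a : nat) (gs : rfs) {struct gs} : rfs :=
  match gs with rnil => rnil | rcons g gs => rcons (column a g) (columns a gs) end.

Section Column.
Variables (r : baire) (n : nat).
Let rn := fun j => r (to_nat (n, j)).

Fixpoint eval_column e v y (H : eval rn e v y) {struct H} :
  forall a, length v = a -> eval r (column a e) (n :: v) y
with evals_columns gs v ws (H : evals rn gs v ws) {struct H} :
  forall a, length v = a -> evals r (columns a gs) (n :: v) ws.
Proof.
- destruct H as [v|v|i v|v|f gs v ws y Hs Hf|f g v y Hf|f g m v r0 y Hr Hg|f v k Hf Hlt];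
    intros a Ha; simpl.
  + constructor.
  + eapply eval_comp. constructor; [apply eProj|constructor].
    eapply eval_eq. apply eSucc. now destruct v.
  + exact (eProj r (S i) (n :: v)).
  + eapply eval_comp; [constructor; [|constructor]|].
    * eapply eval_comp; [|apply eval_pair].
      constructor; [apply eProj|constructor; [apply eProj|constructor]].
    * eapply eval_eq. apply eOracle. now destruct v.
  + eapply eComp.
    * constructor. apply eProj. exact (evals_columns _ _ _ Hs a Ha).
    * exact (eval_column _ _ _ Hf _ (evals_length _ _ _ _ Hs)).
  + subst a. cbn [column length]. eapply eComp.
    * exact (evals_of_Forall2 _ _ _ _ (eval_projs_swap r n 0 v)).
    * apply ePrec0. exact (eval_column _ _ _ Hf _ eq_refl).
  + subst a. cbn [column length]. eapply eComp.
    * exact (evals_of_Forall2 _ _ _ _ (eval_projs_swap r n (S m) v)).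
    * pose proof (eval_column _ _ _ Hr (length (m :: v)) eq_refl) as IH. simpl in IH.
      eapply ePrecS.
      -- eapply eval_comp_inv. exact IH. exact (evals_of_Forall2 _ _ _ _ (eval_projs_swap r n m v)).
      -- eapply eval_comp. apply eval_projs_rot. exact (eval_column _ _ _ Hg _ eq_refl).
  + subst a. apply eMu.
    * eapply eval_comp. apply eval_projs_swap. exact (eval_column _ _ _ Hf _ eq_refl).
    * intros j Hj. destruct (Hlt j Hj) as [z Hz]. exists z.
      eapply eval_comp. apply eval_projs_swap. exact (eval_column _ _ _ Hz _ eq_refl).
- destruct H as [v|g gs v y ys Hg Hgs]; intros a Ha; simpl; constructor.
  + exact (eval_column _ _ _ Hg _ Ha).
  + exact (evals_columns _ _ _ Hgs _ Ha).
Qed.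
End Column.

Definition columnwise e := comp (column 1 e) [comp mFst [rProj 0]; comp mSnd [rProj 0]].

Lemma runs_columnwise e (K : baire -> baire) p :
  (forall p, runs e p (K p)) ->
  runs (columnwise e) p (fun m => K (fun j => p (to_nat (fst (of_nat m), j))) (snd (of_nat m))).
Proof.
  intros HK m. unfold columnwise. eapply eval_comp.
  - constructor; [evs|]. constructor; [evs|constructor].
  - apply (eval_column p (fst (of_nat m)) e [snd (of_nat m)]); auto. apply HK.
Qed.

Lemma lim_rel_uniform p q : lim_rel p q ->
  forall N, exists M, forall n, M <= n -> agree N (fun j => p (to_nat (n, j))) q.
Proof.
  intros Hl N. induction N.
  - exists 0. intros n _ j Hj; lia.
  - destruct IHN as [M1 H1]. destruct (Hl N) as [M2 H2]. exists (M1 + M2). intros n Hn j Hj.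
    destruct (Nat.eq_dec j N).
    + subst; apply H2; lia.
    + apply H1; lia.
Qed.

(* By continuity, a total machine commutes with limits columnwise. *)
Lemma lim_rel_columnwise e (K : baire -> baire) p q :
  (forall p, runs e p (K p)) -> lim_rel p q ->
  lim_rel (fun m => K (fun j => p (to_nat (fst (of_nat m), j))) (snd (of_nat m))) (K q).
Proof.
  intros HK Hl k. destruct (eval_use _ _ _ _ (HK q k)) as [N HN].
  destruct (lim_rel_uniform p q Hl N) as [M HM].
  exists M. intros n Hn. rewrite cancel_of_to. cbn [fst snd].
  eapply eval_det. apply HK. apply HN, HM; auto.
Qed.

(** * Strong Weihrauch reductions *)

Definition reduction_by {X Y Z W : repr_space} (eH eK : rf) (f : problem X Y) (g : problem Z W) :=
  forall G : baire -> option baire,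
    realizes (fun p q => G p = Some q) g ->
    realizes (fun p q => exists q1 q2, runs eK p q1 /\ G q1 = Some q2 /\ runs eH q2 q) f.

Definition choose_opt (P : baire -> Prop) : option baire :=
  match excluded_middle_informative (exists q, P q) with
  | left H => Some (proj1_sig (constructive_indefinite_description _ H))
  | right _ => None
  end.

Lemma choose_opt_some P q : choose_opt P = Some q -> P q.
Proof.
  unfold choose_opt. destruct (excluded_middle_informative _); [|discriminate].
  destruct (constructive_indefinite_description _ _); simpl. now intros [= <-].
Qed.

Lemma choose_opt_ex P q : P q -> exists q', choose_opt P = Some q' /\ P q'.
Proof.
  intros H. unfold choose_opt. destruct (excluded_middle_informative _) as [e|n].
  - destruct (constructive_indefinite_description _ _); simpl. eauto.
  - exfalso; eauto.
Qed.

Lemma realizer_exists {X Y : repr_space} (h : problem X Y) :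
  exists G, realizes (fun p q => G p = Some q) h.
Proof.
  set (P p q := exists z y, delta X p z /\ delta Y q y /\ h z y).
  exists (fun p => choose_opt (P p)). intros p z Hp [y Hy]. destruct (delta_surj Y y) as [q Hq].
  destruct (choose_opt_ex (P p) q) as [q' [E [z' [y' [H1 [H2 H3]]]]]]; [unfold P; eauto|].
  exists q'. split; auto. rewrite (delta_fun X _ _ _ Hp H1). eauto.
Qed.

(* The realizer of [g] fed to the first reduction answers, on input [a], the output of
   [eH2 o G o eK2] on [a]; the composite machines are then obtained by substitution. *)
Lemma sW_trans {X Y Z W U V : repr_space} (f : problem X Y) (g : problem Z W) (h : problem U V) :
  sW f g -> sW g h -> sW f h.
Proof.
  intros [eH1 [eK1 H1]] [eH2 [eK2 H2]].
  exists (subst_oracle eH2 eH1), (subst_oracle eK1 eK2). intros G HG.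
  set (P a q := exists b b2, runs eK2 a b /\ G b = Some b2 /\ runs eH2 b2 q).
  assert (HG' : realizes (fun p q => choose_opt (P p) = Some q) g).
  { intros a z Ha Hd. destruct (H2 G HG a z Ha Hd) as [qq [Hq Hy]].
    destruct (choose_opt_ex (P a) qq Hq) as [q' [E Hq']]. exists q'. split; auto.
    destruct Hq as [b [b2 [R1 [R2 R3]]]]. destruct Hq' as [b' [b2' [R1' [R2' R3']]]].
    pose proof (runs_fun _ _ _ _ R1 R1'); subst b'. rewrite R2 in R2'. injection R2' as ->.
    pose proof (runs_fun _ _ _ _ R3 R3'); subst. auto. }
  intros p x Hp Hd. destruct (H1 _ HG' p x Hp Hd) as [q [[q1 [q2 [R1 [R2 R3]]]] Hy]].
  exists q. split; auto. apply choose_opt_some in R2. destruct R2 as [b [b2 [S1 [S2 S3]]]].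
  exists b, b2. repeat split; auto; eapply runs_subst_oracle; eauto.
Qed.

Lemma reduction_by_total_K {X Y Z W : repr_space} (f : problem X Y) (h : problem Z W) eH eK :
  (forall p, exists x, delta X p x /\ exists y, f x y) ->
  reduction_by eH eK f h -> forall p, exists q, runs eK p q.
Proof.
  intros Htot Hred p. destruct (realizer_exists h) as [G0 HG0].
  destruct (Htot p) as [x [Hx Hd]].
  destruct (Hred G0 HG0 p x Hx Hd) as [q [[q1 [q2 [R _]]] _]]. eauto.
Qed.

(* The reduction of [g] is run with the realizer [Gh] of [h] that, on the one input
   [K q0] it will be given, answers what [G] answers on the jump name [t] of [K q0];
   elsewhere [Gh] consults [G] on a constant sequence. *)
Lemma sW_jump {X Y Z W : repr_space} (g : problem X Y) (h : problem Z W) eH eK :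
  (forall p, exists q, runs eK p q) -> reduction_by eH eK g h -> sW (jump g) (jump h).
Proof.
  intros Htot Hred.
  destruct (choice _ Htot) as [K HK].
  exists eH, (columnwise eK). intros G HG p x Hp Hd. destruct Hp as [q0 [Hl Hq0]].
  set (t m := K (fun j => p (to_nat (fst (of_nat m), j))) (snd (of_nat m))).
  pose proof (lim_rel_columnwise eK K p q0 HK Hl) as Hlt; fold t in Hlt.
  set (Gh q := if excluded_middle_informative (q = K q0) then G t
               else G (fun m => q (snd (of_nat m)))).
  assert (HGh : realizes (fun p q => Gh p = Some q) h).
  { intros q z Hq Hdz. unfold Gh. destruct (excluded_middle_informative (q = K q0)).
    - subst q. apply HG; auto. exists (K q0). auto.
    - apply HG; auto. exists q. split; auto. intros k. exists 0. intros n0 _.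
      now rewrite cancel_of_to. }
  destruct (Hred Gh HGh q0 x Hq0 Hd) as [qq [[a [b [R1 [R2 R3]]]] Hy]].
  rewrite (runs_fun _ _ _ _ R1 (HK q0)) in R2. unfold Gh in R2.
  destruct (excluded_middle_informative (K q0 = K q0)); [|congruence].
  exists qq. split; auto. exists t, b. split; [apply runs_columnwise, HK|]. auto.
Qed.

(** * Completion *)

Lemma completion_total {X Y : repr_space} (f : problem X Y) xo : exists yo, completion f xo yo.
Proof.
  destruct (classic (exists x y, xo = Some x /\ f x y)) as [[x [y [-> H]]]|H].
  - exists (Some y). intros x' [= <-] _. eauto.
  - exists None. intros x -> [y Hy]. exfalso; eauto.
Qed.

Lemma compl_delta_total (X : repr_space) p : exists xo, compl_delta X p xo.
Proof.
  destruct (classic (exists q x, minus1 p q /\ delta X q x)) as [[q [x H]]|H].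
  - exists (Some x). simpl. eauto.
  - now exists None.
Qed.

Lemma minus1_succ q : minus1 (fun j => S (q j)) q.
Proof.
  split.
  - intros k. exists k. now rewrite nz_count_succ.
  - intros i _. rewrite nz_count_succ. lia.
Qed.

Lemma ex_least (P : nat -> Prop) : (exists n, P n) -> exists n, P n /\ forall m, m < n -> ~ P m.
Proof.
  intros [n Hn]. induction n as [n IH] using lt_wf_ind.
  destruct (classic (exists m, m < n /\ P m)) as [[m [Hm Pm]]|H]; eauto.
  exists n. split; auto. intros m Hm Pm. eauto.
Qed.

Definition mSucc := comp rSucc [rOracle].
Lemma runs_succ p : runs mSucc p (fun n => S (p n)).
Proof. intros n. unfold mSucc. evs. Qed.

Definition mPredO := comp mPred [rOracle].
Lemma runs_pred p : runs mPredO p (fun n => p n - 1).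
Proof. intros n. unfold mPredO. evs. Qed.

Definition mFindTest :=
  comp mAdd [comp mDist [comp mNzCount [rProj 0]; rProj 1]; comp mIsZero [comp rOracle [rProj 0]]].

Lemma eval_findTest w i k v : eval w mFindTest (i :: k :: v)
  ((nz_count w i - k) + (k - nz_count w i) + (if w i =? 0 then 1 else 0)).
Proof. unfold mFindTest. evs. Qed.

(* Entry [k] of [w - 1] is read off at the least [i] with [w i <> 0] and
   [nz_count w i = k]. *)
Definition mMinus1 := comp mPred [comp rOracle [rMu mFindTest]].

Lemma runs_minus1 w q : minus1 w q -> runs mMinus1 w q.
Proof.
  intros [Hm1 Hm2] k.
  destruct (ex_least (fun i => nz_count w i = k /\ w i <> 0) (Hm1 k)) as [i [[Hi Hw] Hl]].
  unfold mMinus1. eapply eval_comp; [constructor; [|constructor]|].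
  - eapply eval_comp; [constructor; [|constructor]|apply eOracle].
    apply eMu.
    + eapply eval_eq. apply (eval_findTest w i k []). decide_all.
    + intros m Hm. specialize (Hl m Hm).
      exists ((nz_count w m - k) + (k - nz_count w m) + (if w m =? 0 then 1 else 0) - 1).
      eapply eval_eq. apply (eval_findTest w m k []).
      destruct (Nat.eqb_spec (w m) 0); [lia|]. assert (nz_count w m <> k) by tauto. lia.
  - eapply eval_eq. apply eval_pred. simpl. rewrite <- Hi, Hm2; auto.
Qed.

Lemma sW_completion {X Y : repr_space} (f : problem X Y) : sW f (completion f).
Proof.
  exists mMinus1, mSucc. intros G HG p x Hp Hd.
  destruct (completion_total f (Some x)) as [yo0 Hyo0].
  destruct (HG (fun n => S (p n)) (Some x)) as [q2 [E [yo [Hyo Hc]]]]; eauto.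
  { exists p. split; auto. apply minus1_succ. }
  destruct (Hc x eq_refl Hd) as [y [-> Hf]]. destruct Hyo as [qq [Hm Hqq]].
  exists qq. split; eauto. exists (fun n => S (p n)), q2.
  split; [apply runs_succ|]. split; auto. now apply runs_minus1.
Qed.

Lemma nz_count_pred p u : minus1 p u ->
  forall i, nz_count (fun k => p k - 1) i = nz_count u (nz_count p i).
Proof.
  intros [_ H2] i. induction i; simpl; auto. rewrite IHi.
  destruct (Nat.eqb_spec (p i) 0) as [E|E].
  - rewrite E. simpl. rewrite Nat.add_0_r. auto.
  - rewrite Nat.add_1_r. simpl. rewrite H2 by auto. reflexivity.
Qed.

Lemma minus1_pred p u v : minus1 p u -> (minus1 (fun k => p k - 1) v <-> minus1 u v).
Proof.
  intros Hm. pose proof (nz_count_pred p u Hm) as Hn. destruct Hm as [Hm1 Hm2]. split.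
  - intros [A B]. split.
    + intros k. destruct (A k) as [i [Hi Hp]]. exists (nz_count p i).
      rewrite <- Hn. split; auto. rewrite Hm2 by lia. auto.
    + intros i' Hi'. destruct (Hm1 i') as [i [<- Hpi]]. rewrite Hm2 in * by auto.
      rewrite <- Hn. rewrite B by auto. lia.
  - intros [A B]. split.
    + intros k. destruct (A k) as [i' [Hi' Hu]]. destruct (Hm1 i') as [i [<- Hpi]].
      exists i. rewrite Hn. split; auto. rewrite Hm2 in Hu by auto. auto.
    + intros i Hi. rewrite Hn. rewrite B; rewrite Hm2; lia.
Qed.

(* Entrywise decrement maps a name of [Some xo] in the double completion to a name of [xo];
   on every other input any answer is allowed. *)
Lemma completion_completion_sW {X Y : repr_space} (f : problem X Y) :
  sW (completion (completion f)) (completion f).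
Proof.
  exists mSucc, mPredO. intros G HG p xoo Hp _.
  set (p' := fun k => p k - 1).
  destruct (compl_delta_total X p') as [zo Hz].
  destruct (completion_total f zo) as [yo0 Hyo0].
  destruct (HG p' zo Hz) as [q2 [E [yo [Hyo Hc]]]]; eauto.
  exists (fun n => S (q2 n)). split.
  { exists p', q2. split; [apply runs_pred|]. split; auto. apply runs_succ. }
  exists (Some yo). split; [exists q2; split; auto; apply minus1_succ|].
  intros xo -> Hd. exists yo. split; auto.
  destruct Hp as [u [Hu Hxo]].
  enough (zo = xo) by (subst; auto).
  apply (compl_delta_fun X p'); auto. destruct xo as [x|]; simpl in *.
  - destruct Hxo as [v [Hv Hx]]. exists v. split; auto. now apply (minus1_pred p u v Hu).
  - intros [v [x [Hv Hx]]]. apply Hxo. exists v, x. split; auto. now apply (minus1_pred p u v Hu).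
Qed.

Lemma sW_jump_completion {X Y Z W : repr_space} (f : problem X Y) (h : problem Z W) :
  sW (completion f) h -> sW (jump (completion f)) (jump h).
Proof.
  intros [eH [eK H]]. apply (sW_jump _ _ eH eK); auto.
  apply (reduction_by_total_K (completion f) h eH eK); auto.
  intros p. destruct (compl_delta_total X p) as [xo Hxo].
  exists xo. split; auto. apply completion_total.
Qed.

(** * Limits of completion names *)

(* When [p - 1] is a [jump_space] name [r] with [lim_rel r q], the entry of [r] written
   at position [n] of [p] is [r (to_nat (a, out_col p n))] for some [a]. *)
Definition out_col p n := snd (of_nat (nz_count p n)).

Definition mOutCol := comp mSnd [comp mNzCount [rProj 0]].
Lemma eval_out_col p n v : eval p mOutCol (n :: v) (out_col p n).
Proof. unfold mOutCol. evs. Qed.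
#[local] Hint Resolve eval_out_col : eval_db.

(* The last value written into coordinate [j] before stage [n]. *)
Fixpoint latest p n j :=
  match n with
  | 0 => 0
  | S n =>
      if p n =? 0 then latest p n j
      else if out_col p n =? j then p n - 1 else latest p n j
  end.

(* [S m] for the last stage [m < n] at which a coordinate [<= j] changed value. *)
Fixpoint change_stage p n j :=
  match n with
  | 0 => 0
  | S n =>
      if p n =? 0 then change_stage p n j
      else if (out_col p n <=? j) && negb (p n - 1 =? latest p n (out_col p n)) then S n
      else change_stage p n j
  end.

Definition mOracle0 := comp rOracle [rProj 0].

Definition mLatest :=
  comp (rPrec rZero (comp mCond [comp mAdd [comp mIsZero [mOracle0];
                                             comp mDist [comp mOutCol [rProj 0]; rProj 2]];
                                 comp mPred [mOracle0]; rProj 1]))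
       [rProj 0; rProj 1].

Lemma eval_latest p n j v : eval p mLatest (n :: j :: v) (latest p n j).
Proof.
  unfold mLatest, mOracle0. ev_prec (fun _ : list nat => 0) (fun (n r : nat) (w : list nat) =>
    if (if p n =? 0 then 1 else 0) + ((out_col p n - nth 0 w 0) + (nth 0 w 0 - out_col p n)) =? 0
    then p n - 1 else r).
  induction n; [reflexivity|]. cbn [prec_iter latest]. rewrite IHn. simpl. decide_all.
Qed.
#[local] Hint Resolve eval_latest : eval_db.

Definition mChangeStage :=
  comp (rPrec rZero (comp mCond [
          comp mAdd [comp mAdd [comp mIsZero [mOracle0]; comp mSub [comp mOutCol [rProj 0]; rProj 2]];
                     comp mIsZero [comp mDist [comp mPred [mOracle0];
                                               comp mLatest [rProj 0; comp mOutCol [rProj 0]]]]];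
          comp rSucc [rProj 0]; rProj 1]))
       [rProj 0; rProj 1].

Lemma eval_change_stage p n j v : eval p mChangeStage (n :: j :: v) (change_stage p n j).
Proof.
  unfold mChangeStage, mOracle0. ev_prec (fun _ : list nat => 0) (fun (n r : nat) (w : list nat) =>
    if (if p n =? 0 then 1 else 0) + (out_col p n - nth 0 w 0) +
       (if (p n - 1 - latest p n (out_col p n)) + (latest p n (out_col p n) - (p n - 1)) =? 0
        then 1 else 0) =? 0
    then S n else r).
  induction n; [reflexivity|]. cbn [prec_iter change_stage]. rewrite IHn. simpl. decide_all.
Qed.
#[local] Hint Resolve eval_change_stage : eval_db.

(* Stage [n] of the approximation puts [S (latest p n j)] at position [to_nat (c, j)] for
   the current [c = change_stage p n j] and [0] elsewhere; in the limit each coordinate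
   [j] occupies one position, and these positions increase with [j]. *)
Definition approx p n k :=
  if change_stage p n (snd (of_nat k)) =? fst (of_nat k)
  then S (latest p n (snd (of_nat k))) else 0.

Definition approx_seq p m := approx p (fst (of_nat m)) (snd (of_nat m)).

Definition mApproxSeq :=
  comp mCond [comp mDist [comp mChangeStage [comp mFst [rProj 0]; comp mSnd [comp mSnd [rProj 0]]];
                          comp mFst [comp mSnd [rProj 0]]];
              comp rSucc [comp mLatest [comp mFst [rProj 0]; comp mSnd [comp mSnd [rProj 0]]]];
              rZero].

Lemma runs_approx_seq p : runs mApproxSeq p (approx_seq p).
Proof. intros m. unfold mApproxSeq. evs. unfold approx_seq, approx. decide_all. Qed.

Lemma change_stage_le p n j : change_stage p n j <= n.
Proof. induction n; simpl; auto. decide_all. Qed.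

Lemma change_stage_mono p n n' j : n <= n' -> change_stage p n j <= change_stage p n' j.
Proof. induction 1; auto. simpl. pose proof (change_stage_le p m j). decide_all. Qed.

Lemma change_stage_mono_r p n j j' : j <= j' -> change_stage p n j <= change_stage p n j'.
Proof.
  intros Hj. induction n; simpl; auto.
  pose proof (change_stage_le p n j). pose proof (change_stage_le p n j'). decide_all.
Qed.

Lemma bounded_nondecr_stable (f : nat -> nat) c :
  (forall n n', n <= n' -> f n <= f n') -> (forall n, f n <= c) ->
  exists N, forall n, N <= n -> f n = f N.
Proof.
  intros Hm Hb.
  enough (H : forall d N0, c - f N0 = d -> exists N, forall n, N <= n -> f n = f N)
    by exact (H _ 0 eq_refl).
  induction d as [d IH] using lt_wf_ind. intros N0 Hd.
  destruct (classic (exists n, N0 <= n /\ f n <> f N0)) as [[n [H1 H2]]|H].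
  - refine (IH (c - f n) _ n eq_refl). pose proof (Hm _ _ H1). pose proof (Hb n). lia.
  - exists N0. intros n Hn. apply NNPP. intro; apply H; eauto.
Qed.

Lemma latest_stable p N j :
  (forall n, N <= n -> change_stage p n j = change_stage p N j) ->
  forall n, N <= n -> latest p n j = latest p N j.
Proof.
  intros HC n Hn. induction Hn; auto. simpl.
  pose proof (HC (S m) (le_S _ _ Hn)) as E. pose proof (HC m Hn). simpl in E.
  pose proof (change_stage_le p m j). rewrite <- IHHn.
  destruct (Nat.eqb_spec (p m) 0); auto.
  destruct (Nat.eqb_spec (out_col p m) j); auto. subst j. decide_all.
Qed.

Lemma approx_stable p k : exists N, forall n, N <= n -> approx p n k = approx p N k.
Proof.
  unfold approx. set (c := fst (of_nat k)). set (j := snd (of_nat k)).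
  destruct (classic (exists n0, c < change_stage p n0 j)) as [[n0 H]|H].
  - exists n0. intros n Hn. pose proof (change_stage_mono p _ _ j Hn). decide_all.
  - destruct (bounded_nondecr_stable (fun n => change_stage p n j) c) as [N HN].
    + intros; now apply change_stage_mono.
    + intros n. destruct (Nat.le_gt_cases (change_stage p n j) c); auto. exfalso; eauto.
    + exists N. intros n Hn. now rewrite (HN n Hn), (latest_stable p N j HN n Hn).
Qed.

Lemma approx_seq_lim p : exists s, lim_rel (approx_seq p) s.
Proof.
  destruct (choice _ (approx_stable p)) as [N HN].
  exists (fun k => approx p (N k) k). intros k. exists (N k). intros n Hn.
  unfold approx_seq. rewrite cancel_of_to. auto.
Qed.

Lemma nz_count_mono p i i' : i <= i' -> nz_count p i <= nz_count p i'.
Proof. induction 1; simpl; auto. lia. Qed.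

Lemma nz_count_S_nz p i : p i <> 0 -> nz_count p (S i) = S (nz_count p i).
Proof. intros. simpl. destruct (Nat.eqb_spec (p i) 0); lia. Qed.

Lemma nz_count_const_zero (s : baire) a b :
  a <= b -> (forall i, a <= i < b -> s i = 0) -> nz_count s b = nz_count s a.
Proof.
  induction 1; auto. intros H'. simpl. rewrite IHle by (intros; apply H'; lia).
  rewrite H' by lia. simpl. lia.
Qed.

Section ApproxLimit.
Variables (p r q : baire).
Hypothesis p_minus1 : minus1 p r.
Hypothesis r_lim : lim_rel r q.

(* The entry [r (to_nat (M, j))] with [M] past the convergence point of coordinate [j]
   is written at some stage of [p]; every later write to coordinate [j] has index [>= M]. *)
Lemma latest_lim j : exists N, forall n, N <= n -> latest p n j = q j.
Proof.
  destruct p_minus1 as [Hm1 Hm2]. destruct (r_lim j) as [M HM].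
  destruct (Hm1 (to_nat (M, j))) as [i0 [Hi0 Hp0]].
  exists (S i0). intros n Hn. induction Hn.
  - simpl. destruct (Nat.eqb_spec (p i0) 0); try lia.
    unfold out_col. rewrite Hi0, cancel_of_to. simpl. rewrite Nat.eqb_refl.
    rewrite <- Hm2 by auto. rewrite Hi0. apply HM. lia.
  - simpl. destruct (Nat.eqb_spec (p m) 0); auto.
    destruct (Nat.eqb_spec (out_col p m) j) as [e|]; auto.
    rewrite <- Hm2 by auto.
    destruct (of_nat (nz_count p m)) as [a b] eqn:E.
    unfold out_col in e. rewrite E in e. simpl in e. subst b.
    assert (Ec : nz_count p m = to_nat (a, j)) by (rewrite <- E; symmetry; apply cancel_to_of).
    rewrite Ec. apply HM.
    destruct (Nat.le_gt_cases M a) as [|Hlt]; auto.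
    pose proof (to_nat_mono_l a M j (Nat.lt_le_incl _ _ Hlt)).
    pose proof (nz_count_mono p (S i0) m Hn). rewrite nz_count_S_nz in * by auto.
    assert (to_nat (a, j) <> to_nat (M, j)) by (intro X; apply to_nat_inj in X; injection X; lia).
    lia.
Qed.

Lemma latest_lim_upto j : exists N, forall n, N <= n -> forall i, i <= j -> latest p n i = q i.
Proof.
  induction j.
  - destruct (latest_lim 0) as [N HN]. exists N. intros n Hn i Hi.
    replace i with 0 by lia. auto.
  - destruct IHj as [N1 H1]. destruct (latest_lim (S j)) as [N2 H2]. exists (N1 + N2).
    intros n Hn i Hi. destruct (Nat.eq_dec i (S j)).
    + subst; apply H2; lia.
    + apply H1; lia.
Qed.

Lemma change_stage_lim j : exists c N, forall n, N <= n ->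
  change_stage p n j = c /\ forall i, i <= j -> latest p n i = q i.
Proof.
  destruct (latest_lim_upto j) as [N HN]. exists (change_stage p N j), N.
  intros n Hn. split; [|apply HN; auto]. induction Hn; auto.
  simpl. rewrite <- IHHn. destruct (Nat.eqb_spec (p m) 0); auto.
  destruct (Nat.leb_spec (out_col p m) j); simpl; auto.
  assert (E1 : latest p (S m) (out_col p m) = q (out_col p m)) by (apply HN; lia).
  assert (E2 : latest p m (out_col p m) = q (out_col p m)) by (apply HN; lia).
  simpl in E1. destruct (Nat.eqb_spec (p m) 0); try lia. rewrite Nat.eqb_refl in E1.
  now rewrite E1, E2, Nat.eqb_refl.
Qed.

Definition final_stage j := proj1_sig (constructive_indefinite_description _ (change_stage_lim j)).

Lemma final_stage_spec j : exists N, forall n, N <= n ->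
  change_stage p n j = final_stage j /\ forall i, i <= j -> latest p n i = q i.
Proof.
  unfold final_stage. destruct (constructive_indefinite_description _ (change_stage_lim j)).
  simpl. auto.
Qed.

Lemma final_stage_le_S j : final_stage j <= final_stage (S j).
Proof.
  destruct (final_stage_spec j) as [N1 H1]. destruct (final_stage_spec (S j)) as [N2 H2].
  destruct (H1 (N1 + N2)) as [<- _]; try lia. destruct (H2 (N1 + N2)) as [<- _]; try lia.
  apply change_stage_mono_r; lia.
Qed.

Definition out_pos j := to_nat (final_stage j, j).

Lemma out_pos_lt j j' : j < j' -> out_pos j < out_pos j'.
Proof.
  induction 1; [apply to_nat_lt_S_r, final_stage_le_S|].
  eapply Nat.lt_trans; eauto. apply to_nat_lt_S_r, final_stage_le_S.
Qed.

Variable s : baire.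
Hypothesis s_lim : lim_rel (approx_seq p) s.

Lemma lim_approx_pair c j : s (to_nat (c, j)) = if final_stage j =? c then S (q j) else 0.
Proof.
  destruct (final_stage_spec j) as [N1 H1]. destruct (s_lim (to_nat (c, j))) as [N2 H2].
  rewrite <- (H2 (N1 + N2)) by lia. unfold approx_seq. rewrite cancel_of_to. cbn [fst snd].
  unfold approx. rewrite cancel_of_to. cbn [fst snd].
  destruct (H1 (N1 + N2)) as [-> H3]; try lia. rewrite H3; auto.
Qed.

Lemma lim_approx_nz k : s k <> 0 -> exists j, k = out_pos j.
Proof.
  intros H. rewrite <- (cancel_to_of k) in *. destruct (of_nat k) as [c j].
  rewrite lim_approx_pair in H. exists j. unfold out_pos.
  destruct (Nat.eqb_spec (final_stage j) c); subst; auto. lia.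
Qed.

Lemma lim_approx_out_pos j : s (out_pos j) = S (q j).
Proof. unfold out_pos. now rewrite lim_approx_pair, Nat.eqb_refl. Qed.

Lemma nz_count_out_pos j : nz_count s (out_pos j) = j.
Proof.
  induction j.
  - rewrite (nz_count_const_zero s 0 (out_pos 0)); auto; [lia|].
    intros i [_ Hi]. destruct (Nat.eq_dec (s i) 0) as [|Hs]; auto.
    destruct (lim_approx_nz i Hs) as [[|j'] ->]; [lia|].
    pose proof (out_pos_lt 0 (S j')). lia.
  - pose proof (out_pos_lt j (S j) (Nat.lt_succ_diag_r j)).
    rewrite (nz_count_const_zero s (S (out_pos j)) (out_pos (S j))); auto.
    + rewrite nz_count_S_nz; [lia|]. rewrite lim_approx_out_pos. lia.
    + intros i [Hi1 Hi2]. destruct (Nat.eq_dec (s i) 0) as [|Hs]; auto.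
      destruct (lim_approx_nz i Hs) as [j' ->].
      destruct (Nat.lt_trichotomy j' j) as [X|[X|X]].
      * pose proof (out_pos_lt _ _ X). lia.
      * subst. lia.
      * destruct (Nat.lt_trichotomy j' (S j)) as [Y|[Y|Y]]; try lia; [subst; lia|].
        pose proof (out_pos_lt _ _ Y). lia.
Qed.

Lemma minus1_lim_approx : minus1 s q.
Proof.
  split.
  - intros k. exists (out_pos k). rewrite nz_count_out_pos, lim_approx_out_pos. auto.
  - intros i Hi. destruct (lim_approx_nz i Hi) as [j ->].
    rewrite nz_count_out_pos, lim_approx_out_pos. lia.
Qed.

End ApproxLimit.

Lemma completion_jump_sW_jump_completion (X Y : repr_space) (f : problem X Y) :
  sW (completion (jump f)) (jump (completion f)).
Proof.
  exists rOracle, mApproxSeq. intros G HG p xo Hp _.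
  destruct (approx_seq_lim p) as [s Hs].
  destruct (compl_delta_total X s) as [zo Hz].
  destruct (completion_total f zo) as [yo0 Hyo0].
  destruct (HG (approx_seq p) zo) as [q2 [HGq [yo [Hyo Hf]]]]; [exists s; auto|eauto|].
  exists q2. split; [exists (approx_seq p), q2; auto using runs_approx_seq, runs_oracle|].
  exists yo. split; auto. intros x -> Hdom.
  destruct Hp as [r [Hr [q' [Hl Hq']]]].
  enough (zo = Some x) by (subst; auto).
  apply (compl_delta_fun X s); auto. exists q'. split; auto.
  exact (minus1_lim_approx p r q' Hr Hl s Hs).
Qed.

Theorem proposition4p17 (X Y : repr_space) (f : problem X Y) :
  sW (completion (jump f)) (jump (completion f)) /\
  sW_equiv (jump (completion f)) (completion (jump (completion f))) /\
  (sW_equiv f (completion f) -> sW_equiv (jump f) (completion (jump f))).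
Proof.
  split; [apply completion_jump_sW_jump_completion|]. split.
  - split; [apply sW_completion|].
    eapply sW_trans; [apply (completion_jump_sW_jump_completion _ _ (completion f))|].
    apply sW_jump_completion, completion_completion_sW.
  - intros [_ Hcf]. split; [apply sW_completion|].
    eapply sW_trans; [apply completion_jump_sW_jump_completion|].
    now apply sW_jump_completion.
Qed.
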